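(* Let $s$ be a positive integer. Put $d_s(0)=1$ and $d_s(k)=0$ for all integers $k<0$, and for $k\geq 1$ define $d_s(k)=\sum_{j=1}^sd_s(j-1)\,d_s(k-j)$. Then for every $n\geq s$, \[A_{312}(U_{\mathrm{spine}=s,n}^\alpha)=d_s(n-s+1).\]
   Context: For integers $s\ge1$ and $n\ge 0$, the labeled uneven comb $U^\alpha_{\mathrm{spine}=s,n}$ is the poset on $\{1,\dots,n\}$ whose order is generated by the covering relations $i\lessdot i+1$ for $1\le i\le s-1$ with $i+1\le n$, and $i\lessdot i+s$ whenever $i+s\le n$. A linear extension is viewed as a permutation of $[n]$ in which $x$ precedes $y$ whenever $x<y$ in the poset. $A_\tau(P)$ denotes the number of linear extensions of $P$ that avoid the permutation pattern $\tau$. *)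

From mathcomp Require Import all_boot.
Set Implicit Arguments. Unset Strict Implicit. Unset Printing Implicit Defensive.

(* Covering relations of the labeled uneven comb U^alpha_{spine=s,n} on {1..n}:
   i <. i+1 for 1 <= i <= s-1 with i+1 <= n, and i <. i+s whenever i+s <= n. *)
Definition comb_cover (s n i j : nat) : Prop :=
  1 <= i /\
  ((i <= s - 1 /\ j = i + 1 /\ j <= n) \/ (j = i + s /\ j <= n)).

Inductive comb_le (s n : nat) : nat -> nat -> Prop :=
| comb_le_refl x : 1 <= x <= n -> comb_le s n x x
| comb_le_step x y z : comb_cover s n x y -> comb_le s n y z -> comb_le s n x z.

Definition comb_linext (s n : nat) (p : seq nat) : Prop :=
  perm_eq p (iota 1 n) /\
  forall x y, comb_le s n x y -> index x p <= index y p.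

Definition avoids312 (p : seq nat) : Prop :=
  ~ exists i j k, [/\ i < j, j < k, k < size p &
                     nth 0 p j < nth 0 p k < nth 0 p i].

Definition count_is {T : eqType} (P : T -> Prop) (N : nat) : Prop :=
  exists L : seq T, [/\ uniq L, forall x, x \in L <-> P x & size L = N].

(* dlist s k = [:: d_s(0); ...; d_s(k)], with d_s(0)=1,
   d_s(k) = sum_{j=1}^s d_s(j-1) d_s(k-j) (terms with k-j<0 vanish). *)
Fixpoint dlist (s k : nat) : seq nat :=
  match k with
  | 0 => [:: 1]
  | k'.+1 =>
      let L := dlist s k' in
      rcons L (\sum_(1 <= j < s.+1 | j <= k) nth 0 L (j - 1) * nth 0 L (k - j))
  end.

Definition d (s k : nat) : nat := nth 0 (dlist s k) k.

From mathcomp Require Import all_boot zify.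
Set Implicit Arguments. Unset Strict Implicit. Unset Printing Implicit Defensive.

(* In a 312-avoiding linear extension p the elements 1, ..., s - 1 come first: if p
   began with 1, ..., i followed by some y > i + 1, then y, i + 1, i + 2 would form a 312.
   What remains is a 312-avoiding arrangement of the tail s, ..., n in which
   every y precedes y + s.  Such an arrangement of an interval splits at its
   minimum a as u ++ a :: v; avoiding 312 forces u below v, so u and v are
   arrangements of the same kind of two consecutive intervals, and u has fewer
   than s entries because a precedes a + s.  This is the recursion defining
   d_s, applied to an interval of length n - s + 1. *)

Lemma index_cat_mem_notin (T : eqType) (u w : seq T) x y :
  x \in u -> y \notin u -> index x (u ++ w) < index y (u ++ w).
Proof.
move=> xu yNu; rewrite !index_cat xu (negbTE yNu).
by apply: leq_trans (leq_addr _ _); rewrite index_mem.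
Qed.

Lemma index_iota1 k z : 0 < z <= k -> index z (iota 1 k) = z.-1.
Proof.
move=> /andP[z_gt0 zk].
have zk' : z.-1 < size (iota 1 k) by rewrite size_iota prednK.
have := index_uniq 0 zk' (iota_uniq 1 k).
rewrite nth_iota; first by rewrite add1n prednK.
by rewrite -(size_iota 1 k).
Qed.

Lemma perm_iota_cat (u v : seq nat) b k :
  perm_eq (u ++ v) (iota b k) -> allrel leq u v ->
  perm_eq u (iota b (size u)) /\ perm_eq v (iota (b + size u) (size v)).
Proof.
move=> Puv uv.
have sorted_uv : sorted leq (sort leq u ++ sort leq v).
  rewrite (sorted_pairwise leq_trans) pairwise_cat -!(sorted_pairwise leq_trans).
  rewrite !(sort_sorted leq_total) !andbT; apply/allrelP => x y.
  by rewrite !mem_sort; apply/allrelP.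
have : sort leq u ++ sort leq v = iota b (size u) ++ iota (b + size u) (size v).
  apply: (sorted_eq leq_trans anti_leq) => //; first by rewrite -iotaD iota_sorted.
  rewrite -iotaD -size_cat (perm_size Puv) size_iota; apply: perm_trans Puv.
  by apply: perm_cat; rewrite perm_sort.
move/eqP; rewrite eqseq_cat ?size_sort ?size_iota // => /andP[/eqP <- /eqP <-].
by rewrite !(perm_sym _ (sort _ _)) !perm_sort.
Qed.

Lemma cat_cons_inj (T : eqType) (a : T) (u1 u2 v1 v2 : seq T) :
  a \notin u1 -> a \notin u2 -> u1 ++ a :: v1 = u2 ++ a :: v2 -> u1 = u2 /\ v1 = v2.
Proof.
move=> aNu1 aNu2 E.
have size_u : size u1 = size u2.
  have := congr1 (index a) E.
  by rewrite !index_cat (negbTE aNu1) (negbTE aNu2) /= eqxx !addn0.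
by move/eqP: E; rewrite eqseq_cat // => /andP[/eqP -> /eqP[->]].
Qed.

Lemma allpairs_uniq_key (S T : eqType) (s : seq S) (t : S -> seq T) (key : T -> S) :
  uniq s -> {in s, forall x, uniq (t x)} ->
  {in s, forall x, {in t x, forall y, key y = x}} ->
  uniq [seq y | x <- s, y <- t x].
Proof.
elim: s => //= x s IHs /andP[xNs Us] Ut Kt.
rewrite cat_uniq map_id Ut ?mem_head //= IHs //; last 2 first.
- by move=> x' x's; apply: Ut; rewrite inE x's orbT.
- by move=> x' x's; apply: Kt; rewrite inE x's orbT.
rewrite andbT; apply/hasPn => y /allpairsPdep[x' [y' [x's y't ->]]].
apply: contra xNs => y'tx; rewrite -(Kt x (mem_head _ _) y' y'tx).
by rewrite (Kt x' _ y' y't) // inE x's orbT.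
Qed.

Lemma avoids312_catl (u v : seq nat) : avoids312 (u ++ v) -> avoids312 u.
Proof.
move=> Auv [i [j [k [ij jk ku pat]]]]; apply: Auv; exists i, j, k.
have [iu ju] : i < size u /\ j < size u by lia.
by rewrite size_cat !nth_cat iu ju ku; split=> //; lia.
Qed.

Lemma avoids312_catr (u v : seq nat) : avoids312 (u ++ v) -> avoids312 v.
Proof.
move=> Auv [i [j [k [ij jk kv pat]]]]; apply: Auv.
exists (size u + i), (size u + j), (size u + k).
by rewrite size_cat !nth_cat !ltnNge !leq_addr /= !addKn; split=> //; lia.
Qed.

Lemma avoids312_cat (u v : seq nat) :
  avoids312 u -> avoids312 v ->
  (forall x y z, x \in u -> y \in u ++ v -> z \in v -> y < z < x -> False) ->
  avoids312 (u ++ v).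
Proof.
move=> Au Av cross [i [j [k [ij jk kuv pat]]]].
have juv : j < size (u ++ v) by lia.
case: (ltnP k (size u)) => [ku|uk].
  apply: Au; exists i, j, k; move: pat.
  by rewrite !nth_cat ku !(ltn_trans _ ku) //; lia.
case: (ltnP i (size u)) => [iu|ui].
  apply: (cross (nth 0 (u ++ v) i) (nth 0 (u ++ v) j) (nth 0 (u ++ v) k)) => //.
  - by rewrite nth_cat iu mem_nth.
  - exact: mem_nth.
  - by rewrite nth_cat ltnNge uk /= mem_nth // -(ltn_add2l (size u)) subnKC // -size_cat.
apply: Av; exists (i - size u), (j - size u), (k - size u); move: pat.
rewrite size_cat in kuv; rewrite !nth_cat !ltnNge ui uk (leq_trans ui) /=; last lia.
by split=> //; lia.
Qed.

Lemma avoids312_small (u : seq nat) : size u < 3 -> avoids312 u.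
Proof. by move=> u3 [i [j [k [ij jk ku _]]]]; lia. Qed.

Lemma avoids312_iota a k : avoids312 (iota a k).
Proof.
elim: k a => [|k IHk] a; first exact: avoids312_small.
rewrite /= -cat1s; apply: avoids312_cat => //; first exact: avoids312_small.
by move=> x y z; rewrite inE mem_iota => /eqP -> _ /andP[az _]; lia.
Qed.

Lemma avoids312_min_cat (u v : seq nat) a :
  {in u ++ v, forall z, a < z} ->
  avoids312 (u ++ a :: v) <-> [/\ avoids312 u, avoids312 v & allrel leq u v].
Proof.
move=> a_min; split.
  move=> Auav; split; first exact: avoids312_catl Auav.
    by apply: (@avoids312_catr [:: a]); apply: avoids312_catr Auav.
  apply/allrelP=> y z yu zv; rewrite leqNgt; apply/negP=> zy; apply: Auav.
  have az : a < z by apply: a_min; rewrite mem_cat zv orbT.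
  exists (index y u), (size u), (size u + (index z v).+1).
  rewrite size_cat /= !nth_cat index_mem yu ltnn subnn nth_index //.
  have -> : (size u + (index z v).+1 < size u) = false by lia.
  rewrite addKn /= nth_index // az zy ltn_add2l ltnS index_mem zv.
  by rewrite -addSnnS leq_addr.
case=> Au Av /allrelP uv.
have a_le y : y \in u ++ a :: v -> a <= y.
  by rewrite mem_cat inE orbCA -mem_cat => /orP[/eqP -> // | /a_min/ltnW].
apply: avoids312_cat => //.
  rewrite -cat1s; apply: avoids312_cat => //; first exact: avoids312_small.
  move=> x y z; rewrite inE => /eqP -> _ zv /andP[_].
  by rewrite ltnNge ltnW // a_min // mem_cat zv orbT.
move=> x y z xu /a_le ay; rewrite inE => /orP[/eqP -> | zv] /andP[yz zx].
  by move: ay; rewrite leqNgt yz.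
by move: zx; rewrite ltnNge uv.
Qed.

Lemma avoids312_head (y c : nat) w :
  avoids312 (y :: w) -> c.+1 \in y :: w -> {in y :: w, forall x, c <= x} ->
  index c (y :: w) <= index c.+1 (y :: w) -> y = c.
Proof.
move=> Aw c1w cmin ord; apply/eqP/negPn/negP => yNc.
have cw : c \in y :: w by rewrite -index_mem (leq_ltn_trans ord) ?index_mem.
have idx_c : 0 < index c (y :: w) by rewrite /= (negbTE yNc).
have idx_lt : index c (y :: w) < index c.+1 (y :: w).
  rewrite ltn_neqAle ord andbT; apply/eqP => /(congr1 (nth 0 (y :: w))).
  by rewrite !nth_index //; lia.
have y_gt : c.+1 < y.
  have cy : c < y by rewrite ltn_neqAle eq_sym yNc cmin ?mem_head.
  by rewrite ltn_neqAle cy andbT; apply: contraTneq idx_lt => <- /=; rewrite eqxx.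
apply: Aw; exists 0, (index c (y :: w)), (index c.+1 (y :: w)).
by rewrite !nth_index // index_mem c1w /=; split=> //; lia.
Qed.

Definition teeth_ordered (s : nat) (x : seq nat) : Prop :=
  forall y, y \in x -> y + s \in x -> index y x <= index (y + s) x.

Lemma teeth_ordered1 s a : teeth_ordered s [:: a].
Proof. by move=> y; rewrite !inE => /eqP -> /eqP ->. Qed.

Lemma teeth_ordered_cat s (u v : seq nat) :
  teeth_ordered s u -> teeth_ordered s v -> {in v, forall y, y + s \notin u} ->
  teeth_ordered s (u ++ v).
Proof.
move=> Tu Tv vu y; rewrite !index_cat !mem_cat.
case: (boolP (y \in u)) => [yu _ | yNu /= yv].
  case: ifP => [ysu _ | _ _]; first exact: Tu.
  by apply/(leq_trans _ (leq_addr _ _))/ltnW; rewrite index_mem.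
by rewrite (negbTE (vu y yv)) /= leq_add2l; apply: Tv.
Qed.

Lemma teeth_ordered_catl s (u v : seq nat) :
  teeth_ordered s (u ++ v) -> teeth_ordered s u.
Proof.
move=> Tuv y yu ysu.
by have := Tuv y; rewrite !mem_cat yu ysu !index_cat yu ysu; apply.
Qed.

Lemma teeth_ordered_catr s (u v : seq nat) :
  uniq (u ++ v) -> teeth_ordered s (u ++ v) -> teeth_ordered s v.
Proof.
rewrite cat_uniq => /and3P[_ /hasPn vNu _] Tuv y yv ysv.
have := Tuv y; rewrite !mem_cat yv ysv !orbT !index_cat.
by rewrite (negbTE (vNu y yv)) (negbTE (vNu _ ysv)) leq_add2l; apply.
Qed.

Lemma size_dlist s k : size (dlist s k) = k.+1.
Proof. by elim: k => //= k IHk; rewrite size_rcons IHk. Qed.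

Lemma nth_dlist s k i : i <= k -> nth 0 (dlist s k) i = d s i.
Proof.
rewrite /d; elim: k => [|k IHk]; first by rewrite leqn0 => /eqP ->.
rewrite leq_eqVlt => /orP[/eqP -> // | ik].
by rewrite /= nth_rcons size_dlist ik IHk.
Qed.

Lemma dS s k : d s k.+1 = \sum_(0 <= j < minn s k.+1) d s j * d s (k - j).
Proof.
rewrite {1}/d /= nth_rcons size_dlist ltnn eqxx big_add1 succnK.
rewrite (big_nat_widen 0 (minn s k.+1) s _ _ (geq_minl s k.+1)).
rewrite big_nat_cond [RHS]big_nat_cond.
apply: eq_big => [j | j /andP[/andP[_ js] jk]].
  by rewrite ltn_min; case: (j < s); rewrite ?andbF.
by rewrite subn1 subSS !nth_dlist // leq_subr.
Qed.

Definition teeth312 (s a m : nat) (x : seq nat) : Prop :=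
  [/\ perm_eq x (iota a m), avoids312 x & teeth_ordered s x].

Fixpoint enum_teeth312 (s fuel a m : nat) : seq (seq nat) :=
  match fuel, m with
  | f.+1, k.+1 =>
      [seq w | j <- iota 0 (minn s k.+1),
               w <- [seq u ++ a :: v | u <- enum_teeth312 s f a.+1 j,
                                       v <- enum_teeth312 s f (a.+1 + j) (k - j)]]
  | _, _ => [:: [::]]
  end.

Lemma size_enum_teeth312 s f a m :
  m <= f -> size (enum_teeth312 s f a m) = d s m.
Proof.
elim: f a m => [|f IHf] a [|k] //= km.
rewrite size_allpairs_dep dS sumnE big_map /index_iota subn0.
apply: eq_big_seq => j; rewrite mem_iota ltn_min => /and3P[_ _ jk].
by rewrite size_allpairs !IHf //; lia.
Qed.

Lemma teeth312_nil s a : teeth312 s a 0 [::].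
Proof. by split=> //; apply: avoids312_small. Qed.

Lemma teeth312_cat_min s a j k u v :
  j < s -> j <= k -> teeth312 s a.+1 j u -> teeth312 s (a.+1 + j) (k - j) v ->
  teeth312 s a k.+1 (u ++ a :: v).
Proof.
move=> js jk [Pu Au Tu] [Pv Av Tv].
have memu y : y \in u = (a.+1 <= y < a.+1 + j) by rewrite (perm_mem Pu) mem_iota.
have memv y : y \in v = (a.+1 + j <= y < a.+1 + k).
  by rewrite (perm_mem Pv) mem_iota -addnA subnKC.
split.
- rewrite -cat1s perm_catCA /= perm_cons -(subnKC jk) iotaD.
  exact: perm_cat.
- apply/avoids312_min_cat.
    by move=> y; rewrite mem_cat memu memv; lia.
  split=> //; apply/allrelP => y z; rewrite memu memv; lia.
- rewrite -cat1s; apply: teeth_ordered_cat => //.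
    apply: teeth_ordered_cat => //; first exact: teeth_ordered1.
    by move=> y; rewrite memv inE; lia.
  by move=> y; rewrite inE memu memv; lia.
Qed.

Lemma teeth312_split_min s a k x :
  0 < s -> teeth312 s a k.+1 x ->
  exists u v, [/\ x = u ++ a :: v, size u < s, size u <= k,
                  teeth312 s a.+1 (size u) u &
                  teeth312 s (a.+1 + size u) (k - size u) v].
Proof.
move=> s_gt0 [Px Ax Tx].
have Ux : uniq x by rewrite (perm_uniq Px) iota_uniq.
have ax : a \in x by rewrite (perm_mem Px) mem_iota leqnn addnS ltnS leq_addr.
have [u [v Ex]] : exists u v : seq nat, x = u ++ a :: v.
  by case/splitPr: ax => u v; exists u, v.
subst x; exists u, v.
have Puv : perm_eq (u ++ v) (iota a.+1 k).
  by move: Px; rewrite -cat1s perm_catCA /= perm_cons.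
have a_min : {in u ++ v, forall z, a < z}.
  by move=> z; rewrite (perm_mem Puv) mem_iota => /andP[].
have [Au Av uv] := (avoids312_min_cat a_min).1 Ax.
have [Pu Pv] := perm_iota_cat Puv uv.
have size_uv : size u + size v = k by rewrite -size_cat (perm_size Puv) size_iota.
have aNu : a \notin u.
  by apply/negP => au; have := a_min a; rewrite mem_cat au ltnn => /(_ isT).
split=> //.
- rewrite ltnNge; apply/negP => s_le_u.
  have asu : a + s \in u by rewrite (perm_mem Pu) mem_iota; lia.
  have := index_cat_mem_notin (a :: v) asu aNu.
  by rewrite ltnNge Tx // mem_cat ?asu // mem_head orbT.
- by rewrite -size_uv leq_addr.
- by split=> //; apply: teeth_ordered_catl Tx.
- split=> //; first by rewrite -size_uv addKn.
  by rewrite -cat1s catA in Ux Tx; apply: teeth_ordered_catr Ux Tx.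
Qed.

Lemma enum_teeth312_sound s f a m x :
  m <= f -> x \in enum_teeth312 s f a m -> teeth312 s a m x.
Proof.
elim: f a m x => [|f IHf] a [|k] x //= km;
  try by rewrite inE => /eqP ->; apply: teeth312_nil.
case/allpairsPdep => j [w [+ /allpairsP[[u v] /= [uj vk ->]] ->]].
rewrite mem_iota ltn_min => /and3P[_ js jk].
by apply: (teeth312_cat_min js jk); apply: IHf => //; lia.
Qed.

Lemma enum_teeth312_complete s f a m x :
  0 < s -> m <= f -> teeth312 s a m x -> x \in enum_teeth312 s f a m.
Proof.
move=> s_gt0; elim: f a m x => [|f IHf] a [|k] x //= km Tx;
  try by case: Tx => /perm_size; rewrite size_iota => /size0nil ->; rewrite inE.
have [u [v [-> u_lt_s u_le_k Tu Tv]]] := teeth312_split_min s_gt0 Tx.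
apply/allpairsPdep; exists (size u), (u ++ a :: v); split=> //.
  by rewrite mem_iota ltn_min u_lt_s ltnS u_le_k.
by apply/allpairsP; exists (u, v); split=> //; apply: IHf => //; lia.
Qed.

Lemma enum_teeth312_uniq s f a m : m <= f -> uniq (enum_teeth312 s f a m).
Proof.
elim: f a m => [|f IHf] a [|k] //= km.
have enum_u j u : j <= k -> u \in enum_teeth312 s f a.+1 j -> a \notin u /\ size u = j.
  move=> jk /(enum_teeth312_sound (leq_trans jk km)) [Pu _ _].
  by rewrite (perm_mem Pu) (perm_size Pu) mem_iota ltnn size_iota.
apply: (@allpairs_uniq_key _ _ _ _ (index a)); first exact: iota_uniq.
  move=> j; rewrite mem_iota ltn_min => /and3P[_ _ jk].
  apply: allpairs_uniq; try by apply: IHf; lia.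
  move=> [u1 v1] [u2 v2] /allpairsP[[? ?] /= [u1j _ [-> _]]].
  move=> /allpairsP[[? ?] /= [u2j _ [-> _]]] /= E.
  have [aNu1 _] := enum_u _ _ jk u1j; have [aNu2 _] := enum_u _ _ jk u2j.
  by have [-> ->] := cat_cons_inj aNu1 aNu2 E.
move=> j; rewrite mem_iota ltn_min => /and3P[_ _ jk] _ /allpairsP[[u v] /= [uj _ ->]].
have [aNu size_u] := enum_u _ _ jk uj.
by rewrite index_cat (negbTE aNu) /= eqxx addn0.
Qed.

Lemma comb_le_cover s n x y : comb_cover s n x y -> comb_le s n x y.
Proof.
move=> xy; apply: (comb_le_step xy); apply: comb_le_refl.
by case: xy => x1 [[_ [-> yn]] | [-> yn]]; apply/andP; split=> //; lia.
Qed.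

Lemma comb_linextP s n p :
  comb_linext s n p <->
  perm_eq p (iota 1 n) /\ forall x y, comb_cover s n x y -> index x p <= index y p.
Proof.
split=> [[Pp Op] | [Pp Op]]; split=> // x y; first by move/comb_le_cover; apply: Op.
by elim=> // {}x {}y z /Op xy _; apply: leq_trans.
Qed.

Lemma comb_linext312_prefix s n p :
  s <= n -> comb_linext s n p -> avoids312 p -> exists t, p = iota 1 s.-1 ++ t.
Proof.
move=> sn /comb_linextP[Pp Op] Ap.
suff prefix i : i <= s.-1 -> exists t, p = iota 1 i ++ t by apply: prefix.
elim: i => [|i IHi] i_lt; first by exists p.
have [w Ew] := IHi (ltnW i_lt).
have memw z : z \in w = (i < z <= n).
  move: Pp; rewrite Ew -(subnKC (_ : i <= n)) ?iotaD ?perm_cat2l; last by lia.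
  by move/perm_mem ->; rewrite mem_iota; lia.
case: w Ew memw => [|y w] Ew memw; first by move: (memw i.+1); rewrite in_nil; lia.
suff y_eq : y = i.+1.
  by exists w; rewrite Ew y_eq -[in RHS](addn1 i) iotaD -catA.
have index_p z : i < z -> index z p = i + index z (y :: w).
  by move=> iz; rewrite Ew index_cat mem_iota size_iota ifF //; lia.
apply: (avoids312_head (w := w)).
- by apply: (@avoids312_catr (iota 1 i)); rewrite -Ew.
- by rewrite memw; lia.
- by move=> z; rewrite memw => /andP[].
rewrite -(leq_add2l i) -!index_p //; apply: Op.
by split=> //; left; split=> //; lia.
Qed.

Lemma comb_linext312_catE s n t :
  0 < s <= n ->
  comb_linext s n (iota 1 s.-1 ++ t) /\ avoids312 (iota 1 s.-1 ++ t) <->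
  teeth312 s s (n - s + 1) t.
Proof.
move=> /andP[s_gt0 sn]; set p := iota 1 s.-1 ++ t.
have iota_n : iota 1 n = iota 1 s.-1 ++ iota s (n - s + 1).
  rewrite -{2}(prednK s_gt0) -add1n -iotaD; congr iota; lia.
have mem_pre z : z \in iota 1 s.-1 = (0 < z < s) by rewrite mem_iota; lia.
have index_pre z : 0 < z < s -> index z p = z.-1.
  by move=> zs; rewrite index_cat mem_pre zs index_iota1 //; lia.
have index_post z : s <= z -> index z p = s.-1 + index z t.
  by move=> sz; rewrite index_cat mem_pre size_iota ifF //; lia.
split=> [[/comb_linextP[Pp Op] Ap] | [Pt At Tt]].
  have Pt : perm_eq t (iota s (n - s + 1)).
    by rewrite -(perm_cat2l (iota 1 s.-1)) -iota_n.
  have memt z : z \in t = (s <= z <= n) by rewrite (perm_mem Pt) mem_iota; lia.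
  split=> //; first exact: avoids312_catr Ap.
  move=> y; rewrite !memt => yt yst; rewrite -(leq_add2l s.-1) -!index_post; try lia.
  by apply: Op; split; [lia | right; split=> //; lia].
have memt z : z \in t = (s <= z <= n) by rewrite (perm_mem Pt) mem_iota; lia.
split.
  apply/comb_linextP; split; first by rewrite iota_n perm_cat2l.
  move=> x y [x_gt0 [[xs [-> yn]] | [-> yn]]].
    have x_pre : x \in iota 1 s.-1 by rewrite mem_pre; lia.
    case: (ltnP (x + 1) s) => [x1s | sx1].
      by rewrite !index_pre //; lia.
    by apply/ltnW/index_cat_mem_notin; rewrite mem_pre; lia.
  case: (ltnP x s) => [xs | sx].
    by apply/ltnW/index_cat_mem_notin; rewrite mem_pre; lia.
  have [xt xst] : x \in t /\ x + s \in t by rewrite !memt; lia.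
  by rewrite !index_post ?leq_add2l ?Tt //; lia.
apply: avoids312_cat => //; first exact: avoids312_iota.
by move=> x y z; rewrite mem_pre memt; lia.
Qed.

Theorem theorem2 (s n : nat) :
  1 <= s -> s <= n ->
  count_is (fun p : seq nat => comb_linext s n p /\ avoids312 p) (d s (n - s + 1)).
Proof.
move=> s_gt0 sn; have s_n : 0 < s <= n by rewrite s_gt0.
set m := n - s + 1.
exists [seq iota 1 s.-1 ++ t | t <- enum_teeth312 s m s m]; split.
- rewrite map_inj_uniq ?enum_teeth312_uniq // => t1 t2 /(congr1 (drop s.-1)).
  by rewrite !drop_size_cat ?size_iota.
- move=> p; split.
    case/mapP => t /(enum_teeth312_sound (leqnn m)) tP ->.
    exact/(comb_linext312_catE _ s_n).
  case=> Lp Ap; have [t Ep] := comb_linext312_prefix sn Lp Ap.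
  apply/mapP; exists t => //; apply: enum_teeth312_complete => //.
  by apply/(comb_linext312_catE _ s_n); rewrite -Ep.
- by rewrite size_map size_enum_teeth312.
Qed.
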